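(* Let $\mathcal{V}$ be a non-trivial quantale. A functor $\mathsf{F}\colon\mathbf{Cat}(\mathcal{V})_{\mathrm{sym}}\to\mathbf{Cat}(\mathcal{V})_{\mathrm{sym}}$ is Kantorovich if and only if it preserves initial morphisms.
   Context: A quantale $(\mathcal{V},\otimes,k)$ is a complete lattice with commutative monoid structure, each $u\otimes-$ preserving joins, $\hom(u,-)$ its right adjoint; non-trivial: $\bot\ne\top$. $\mathcal{V}$-categories $(X,a)$: $k\le a(x,x)$, $a(x,y)\otimes a(y,z)\le a(x,z)$; symmetric if $a(x,y)=a(y,x)$. $\mathbf{Cat}(\mathcal{V})_{\mathrm{sym}}$ is the category of symmetric $\mathcal{V}$-categories and $\mathcal{V}$-functors $f\colon(X,a)\to(Y,b)$ (maps with $a(x,y)\le b(f x,f y)$); $f$ is initial if equality holds. A cone $(f_i\colon(X,a)\to(X_i,a_i))_i$ is initial if $a(x,y)=\bigwedge_i a_i(f_i(x),f_i(y))$. $\mathcal{V}_s$ is the symmetric $\mathcal{V}$-category $(\mathcal{V},\hom_s)$ with $\hom_s(u,v)=\hom(u,v)\wedge\hom(v,u)$, and $\mathcal{V}_s^\kappa$ has structure $[f,g]=\bigwedge_{i\in\kappa}\hom_s(f(i),g(i))$. A $\kappa$-ary predicate lifting for $\mathsf{F}$ is a natural transformation $\lambda\colon\mathbf{Cat}(\mathcal{V})_{\mathrm{sym}}(-,\mathcal{V}_s^\kappa)\to\mathbf{Cat}(\mathcal{V})_{\mathrm{sym}}(\mathsf{F}-,\mathcal{V}_s)$. $\mathsf{F}$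 is $\Lambda$-Kantorovich for a class $\Lambda$ of predicate liftings if for every symmetric $\mathcal{V}$-category $X$ the cone of all $\lambda_X(f)\colon\mathsf{F}X\to\mathcal{V}_s$ ($\lambda\in\Lambda$ $\kappa$-ary, $f\colon X\to\mathcal{V}_s^\kappa$ a $\mathcal{V}$-functor) is initial; Kantorovich if $\Lambda$-Kantorovich for some class $\Lambda$. *)

Set Implicit Arguments.

Unset Strict Implicit.

Record quantale := Quantale {
  qc :> Type;
  qle : qc -> qc -> Prop;
  qle_refl : forall u, qle u u;
  qle_trans : forall u v w, qle u v -> qle v w -> qle u w;
  qle_antisym : forall u v, qle u v -> qle v u -> u = v;
  qsup : (qc -> Prop) -> qc;
  qsup_ub : forall (S : qc -> Prop) u, S u -> qle u (qsup S);
  qsup_least : forall (S : qc -> Prop) v, (forall u, S u -> qle u v) -> qle (qsup S) v;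
  qtensor : qc -> qc -> qc;
  qk : qc;
  qtensor_assoc : forall u v w, qtensor u (qtensor v w) = qtensor (qtensor u v) w;
  qtensor_comm : forall u v, qtensor u v = qtensor v u;
  qtensor_unit : forall u, qtensor qk u = u;
  qtensor_sup : forall u (S : qc -> Prop),
      qtensor u (qsup S) = qsup (fun w => exists s, S s /\ w = qtensor u s);
  qhom : qc -> qc -> qc;
  qhom_adj : forall u v w, qle (qtensor u v) w <-> qle v (qhom u w)
}.

Section Defs.
Variable V : quantale.
Arguments qk {q}.
Arguments qsup {q}.

Definition qinf (S : V -> Prop) : V := qsup (fun a => forall s, S s -> qle a s).
Definition qtop : V := qsup (fun _ => True).
Definition qbot : V := qsup (fun _ => False).
Definition qmeet (u v : V) : V := qinf (fun w => w = u \/ w = v).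

Definition nontrivial : Prop := qbot <> qtop.

(* hom_s(u,v) = hom(u,v) ∧ hom(v,u): the structure of V_s *)
Definition homs (u v : V) : V := qmeet (qhom u v) (qhom v u).

(* structure of V_s^κ: [f,g] = ⋀_{i ∈ κ} hom_s(f i, g i) *)
Definition powdist (kappa : Type) (f g : kappa -> V) : V :=
  qinf (fun w => exists i, w = homs (f i) (g i)).

Record SymCat := {
  sobj :> Type;
  sdist : sobj -> sobj -> V;
  sdist_refl : forall x, qle qk (sdist x x);
  sdist_trans : forall x y z, qle (qtensor (sdist x y) (sdist y z)) (sdist x z);
  sdist_sym : forall x y, sdist x y = sdist y x
}.
Arguments sdist : clear implicits.

(* V-functors from a symmetric V-category X into a carrier D with a V-valued
   structure d (used with D a symmetric V-category, V_s or V_s^κ). *)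
Record vfun_into (X : SymCat) (D : Type) (d : D -> D -> V) := VFun {
  vfn :> sobj X -> D;
  vfn_mono : forall x y, qle (sdist X x y) (d (vfn x) (vfn y))
}.

Definition vfun (X Y : SymCat) := vfun_into X (sdist Y).

Definition vid (X : SymCat) : vfun X X :=
  @VFun X X (sdist X) (fun x => x) (fun x y => qle_refl (sdist X x y)).

Definition vcomp (X Y : SymCat) (D : Type) (d : D -> D -> V)
  (g : vfun_into Y d) (f : vfun X Y) : vfun_into X d :=
  @VFun X D d (fun x => g (f x))
    (fun x y => qle_trans (vfn_mono f x y) (vfn_mono g (f x) (f y))).

Definition initial (X Y : SymCat) (f : vfun X Y) : Prop :=
  forall x y, sdist X x y = sdist Y (f x) (f y).

Record SFunctor := {
  Fobj : SymCat -> SymCat;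
  Fmap : forall X Y, vfun X Y -> vfun (Fobj X) (Fobj Y);
  Fmap_id : forall X x, Fmap (vid X) x = x;
  Fmap_comp : forall X Y Z (f : vfun X Y) (g : vfun Y Z) x,
      Fmap (vcomp g f) x = Fmap g (Fmap f x)
}.

(* A κ-ary predicate lifting: a natural transformation
   Cat(V)_sym(-, V_s^κ) -> Cat(V)_sym(F -, V_s). *)
Record predlift (F : SFunctor) (kappa : Type) := {
  pl_map : forall X : SymCat,
      vfun_into X (@powdist kappa) -> vfun_into (Fobj F X) homs;
  pl_nat : forall (X Y : SymCat) (g : vfun X Y) (f : vfun_into Y (@powdist kappa))
      (x : Fobj F X),
      pl_map (vcomp f g) x = pl_map f (Fmap F g x)
}.

(* F is Λ-Kantorovich for the class Λ = {L i | i : I}, L i of arity ar i *)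
Definition LambdaKantorovich (F : SFunctor) (I : Type) (ar : I -> Type)
  (L : forall i, predlift F (ar i)) : Prop :=
  forall (X : SymCat) (x y : Fobj F X),
    sdist (Fobj F X) x y =
    qinf (fun w => exists (i : I) (f : vfun_into X (@powdist (ar i))),
            w = homs (pl_map (L i) f x) (pl_map (L i) f y)).

Definition Kantorovich (F : SFunctor) : Prop :=
  exists (I : Type) (ar : I -> Type) (L : forall i, predlift F (ar i)),
    LambdaKantorovich L.

Definition preserves_initial (F : SFunctor) : Prop :=
  forall (X Y : SymCat) (f : vfun X Y), initial f -> initial (Fmap F f).

End Defs.

(** If F is Λ-Kantorovich and f : X -> Y is initial, every V-functor h : X -> V_s^κ
    extends along f (left Kan extension, h' y = ⋁_x h x ⊗ d(f x, y)), so by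
    naturality each generator of the Kantorovich cone on F X factors through F f,
    and F f is initial.  Conversely, take for Λ all representable liftings
    λ(g)(t) = d(p, F g t) with p ∈ F(V_s^κ).  The Yoneda embedding X -> V_s^X is
    initial, hence so is its image under F, and the lifting represented by the
    image of x already recovers d(x, y) on F X. *)

From Stdlib Require Import FunctionalExtensionality ProofIrrelevance Setoid.

Section SymmetricVCategories.
Variable V : quantale.
Notation le := (@qle V).
Notation tn := (@qtensor V).
Notation hm := (@qhom V).

Lemma qinf_lb (S : V -> Prop) s : S s -> le (qinf S) s.
Proof. intro Hs. apply qsup_least. intros u Hu. apply Hu, Hs. Qed.

Lemma qinf_glb (S : V -> Prop) t : (forall s, S s -> le t s) -> le t (qinf S).
Proof. intro H. apply qsup_ub. exact H. Qed.

Lemma qinf_ext (S T : V -> Prop) : (forall w, S w <-> T w) -> qinf S = qinf T.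
Proof.
  intro H. apply qle_antisym; apply qinf_glb; intros s Hs; apply qinf_lb, H, Hs.
Qed.

Lemma qhom_of_tensor_le (u v w : V) : le (tn u v) w -> le v (hm u w).
Proof. apply qhom_adj. Qed.

Lemma tensor_le_of_qhom (u v w : V) : le v (hm u w) -> le (tn u v) w.
Proof. apply qhom_adj. Qed.

Lemma tensor_monor (w u v : V) : le u v -> le (tn w u) (tn w v).
Proof.
  intro H. apply tensor_le_of_qhom. apply qle_trans with v; [exact H |].
  apply qhom_of_tensor_le, qle_refl.
Qed.

Lemma tensor_mono (u v u' v' : V) : le u u' -> le v v' -> le (tn u v) (tn u' v').
Proof.
  intros Hu Hv. apply qle_trans with (tn u v'); [now apply tensor_monor |].
  rewrite (qtensor_comm u v'), (qtensor_comm u' v'). now apply tensor_monor.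
Qed.

Lemma qhom_eval (u v : V) : le (tn u (hm u v)) v.
Proof. apply tensor_le_of_qhom, qle_refl. Qed.

Lemma qhom_comp (u v w : V) : le (tn (hm u v) (hm v w)) (hm u w).
Proof.
  apply qhom_of_tensor_le. rewrite qtensor_assoc.
  apply qle_trans with (tn v (hm v w)); [| apply qhom_eval].
  rewrite (qtensor_comm _ (hm v w)), (qtensor_comm v).
  apply tensor_monor, qhom_eval.
Qed.

Lemma k_le_qhom_refl (u : V) : le (qk V) (hm u u).
Proof. apply qhom_of_tensor_le. rewrite qtensor_comm, qtensor_unit. apply qle_refl. Qed.

Lemma qhom_le_of_k_le (u v : V) : le (qk V) u -> le (hm u v) v.
Proof.
  intro Hu. apply qle_trans with (tn u (hm u v)); [| apply qhom_eval].
  rewrite <- (qtensor_unit (hm u v)) at 1.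
  rewrite (qtensor_comm (qk V)), (qtensor_comm u). now apply tensor_monor.
Qed.

Lemma homs_le_qhom (u v : V) : le (homs u v) (hm u v).
Proof. apply qinf_lb. auto. Qed.

Lemma homs_le_qhom_sym (u v : V) : le (homs u v) (hm v u).
Proof. apply qinf_lb. auto. Qed.

Lemma homs_glb (t u v : V) : le t (hm u v) -> le t (hm v u) -> le t (homs u v).
Proof. intros H1 H2. apply qinf_glb. intros s [-> | ->]; assumption. Qed.

Lemma homsC (u v : V) : homs u v = homs v u.
Proof.
  apply qle_antisym; apply homs_glb; (apply homs_le_qhom || apply homs_le_qhom_sym).
Qed.

Lemma homs_comp (u v w : V) : le (tn (homs u v) (homs v w)) (homs u w).
Proof.
  apply homs_glb.
  - eapply qle_trans; [apply tensor_mono; apply homs_le_qhom | apply qhom_comp].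
  - rewrite qtensor_comm.
    eapply qle_trans; [apply tensor_mono; apply homs_le_qhom_sym | apply qhom_comp].
Qed.

Lemma powdist_le (kappa : Type) (f g : kappa -> V) i :
  le (powdist f g) (homs (f i) (g i)).
Proof. apply qinf_lb. eauto. Qed.

Lemma powdist_glb (kappa : Type) (f g : kappa -> V) t :
  (forall i, le t (homs (f i) (g i))) -> le t (powdist f g).
Proof. intro H. apply qinf_glb. intros s [i ->]. apply H. Qed.

Definition Vs_pow (kappa : Type) : SymCat V.
Proof.
  refine (@Build_SymCat V (kappa -> V) (@powdist V kappa) _ _ _).
  - intro f. apply powdist_glb. intro i. apply homs_glb; apply k_le_qhom_refl.
  - intros f g h. apply powdist_glb. intro i.
    eapply qle_trans; [apply tensor_mono; apply powdist_le | apply homs_comp].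
  - intros f g. apply qinf_ext. intro w.
    split; intros [i ->]; exists i; apply homsC.
Defined.

Lemma sdist_le_homs (Z : SymCat V) (p t t' : Z) :
  le (sdist t t') (homs (sdist p t) (sdist p t')).
Proof.
  apply homs_glb; apply qhom_of_tensor_le.
  - apply sdist_trans.
  - rewrite (sdist_sym t t'). apply sdist_trans.
Qed.

Lemma vfun_ext (X : SymCat V) (D : Type) (d : D -> D -> V) (h1 h2 : vfun_into X d) :
  (forall x, h1 x = h2 x) -> h1 = h2.
Proof.
  destruct h1 as [f1 p1], h2 as [f2 p2]. simpl. intro H.
  assert (f1 = f2) as <- by (apply functional_extensionality; exact H).
  f_equal. apply proof_irrelevance.
Qed.

Section KanExtension.
Variables (X Y : SymCat V) (f : vfun X Y) (kappa : Type)
  (h : vfun_into X (@powdist V kappa)).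

Definition lan_fun (y : Y) : kappa -> V :=
  fun i => qsup (fun w => exists x, w = tn (h x i) (sdist (f x) y)).

Lemma sdist_le_qhom_lan (y y' : Y) i :
  le (sdist y y') (hm (lan_fun y i) (lan_fun y' i)).
Proof.
  apply qhom_of_tensor_le. unfold lan_fun. rewrite qtensor_comm, qtensor_sup.
  apply qsup_least. intros u [s [[x ->] ->]].
  rewrite qtensor_comm, <- qtensor_assoc.
  eapply qle_trans; [apply tensor_monor, sdist_trans |].
  apply qsup_ub. eauto.
Qed.

Definition lan : vfun_into Y (@powdist V kappa).
Proof.
  refine (@VFun V Y _ _ lan_fun _).
  intros y y'. apply powdist_glb. intro i. apply homs_glb.
  - apply sdist_le_qhom_lan.
  - rewrite sdist_sym. apply sdist_le_qhom_lan.
Defined.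

Lemma lan_comp_initial : initial f -> vcomp lan f = h.
Proof.
  intro Hf. apply vfun_ext. intro x0. simpl. apply functional_extensionality. intro i.
  unfold lan_fun. apply qle_antisym.
  - apply qsup_least. intros u [x ->]. rewrite <- Hf.
    apply tensor_le_of_qhom.
    eapply qle_trans; [| apply homs_le_qhom].
    eapply qle_trans; [apply vfn_mono | apply (powdist_le _ (h x) (h x0) i)].
  - eapply qle_trans; [| apply qsup_ub; exists x0; reflexivity].
    rewrite qtensor_comm, <- (qtensor_unit (h x0 i)) at 1.
    apply tensor_mono; [apply sdist_refl | apply qle_refl].
Qed.

End KanExtension.

Definition yoneda (X : SymCat V) : vfun X (Vs_pow (sobj X)).
Proof.
  refine (@VFun V X _ _ (fun x z => sdist z x) _).
  intros x y. apply powdist_glb. intro z. apply sdist_le_homs.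
Defined.

Lemma yoneda_initial (X : SymCat V) : initial (yoneda X).
Proof.
  intros x y. apply qle_antisym; [apply (vfn_mono (yoneda X)) |].
  eapply qle_trans; [apply (powdist_le _ (yoneda X x) (yoneda X y) x) |].
  eapply qle_trans; [apply homs_le_qhom | apply qhom_le_of_k_le, sdist_refl].
Qed.

Section RepresentableLifting.
Variables (F : SFunctor V) (kappa : Type) (p : Fobj F (Vs_pow kappa)).

Definition representable_map (X : SymCat V) (g : vfun_into X (@powdist V kappa)) :
  vfun_into (Fobj F X) (@homs V).
Proof.
  refine (@VFun V (Fobj F X) _ _
            (fun t => sdist p (Fmap F (Y := Vs_pow kappa) g t)) _).
  intros t t'. eapply qle_trans; [apply (vfn_mono (Fmap F (Y := Vs_pow kappa) g)) |].
  apply sdist_le_homs.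
Defined.

Definition representable_lifting : predlift F kappa.
Proof.
  refine (@Build_predlift V F kappa representable_map _).
  intros X Y g f x. simpl. f_equal.
  apply (Fmap_comp (s := F) g (f : vfun Y (Vs_pow kappa))).
Defined.

End RepresentableLifting.

Lemma Kantorovich_preserves_initial (F : SFunctor V) :
  Kantorovich F -> preserves_initial F.
Proof.
  intros [I [ar [L HL]]] X Y f Hf x y. apply qle_antisym; [apply vfn_mono |].
  rewrite (HL X x y). apply qinf_glb. intros s [i [h ->]].
  rewrite <- (lan_comp_initial _ _ f _ h Hf), !pl_nat. apply vfn_mono.
Qed.

Lemma preserves_initial_Kantorovich (F : SFunctor V) :
  preserves_initial F -> Kantorovich F.
Proof.
  intros HF.
  exists {kappa : Type & sobj (Fobj F (Vs_pow kappa))}, (@projT1 _ _).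
  exists (fun i => representable_lifting F _ (projT2 i)).
  intros X x y. apply qle_antisym.
  - apply qinf_glb. intros s [i [g ->]]. apply vfn_mono.
  - eapply qle_trans.
    { apply qinf_lb. exists (existT _ (sobj X) (Fmap F (yoneda X) x)), (yoneda X).
      reflexivity. }
    simpl. eapply qle_trans; [apply homs_le_qhom |].
    eapply qle_trans; [apply qhom_le_of_k_le, sdist_refl |].
    rewrite <- (HF _ _ _ (yoneda_initial X)). apply qle_refl.
Qed.

End SymmetricVCategories.

Theorem theorem10 (V : quantale) (HV : nontrivial V) (F : SFunctor V) :
  Kantorovich F <-> preserves_initial F.
Proof.
  split; [apply Kantorovich_preserves_initial | apply preserves_initial_Kantorovich].
Qed.
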